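(* Let $k\le n\le m<\phi(k)$. Then the value in $U_q^+(\mathfrak{sp}_{2n})$ of the bracketed word $[y_k\,x_n\,x_{n+1}\cdots x_m]$, where $y_k=v[k,n-1]=[[\dots[x_k,x_{k+1}],\dots],x_{n-1}]$, does not depend on the arrangement of the (skew) brackets on the sequence $y_k,x_n,x_{n+1},\dots,x_m$.
   Context: Let $\mathbf{k}$ be a field, $G$ an abelian group, $n\ge2$, $X=\{x_1,\dots,x_n\}$, $g_i\in G$, characters $\chi^i:G\to\mathbf{k}^*$, $p_{ij}=\chi^i(g_j)$; for homogeneous $u,v$, $p(u,v)=\chi^u(g_v)$ (obtained by replacing $x_i$ by $g_i$, resp. $\chi^i$). $G\langle X\rangle$: skew group algebra with $x_ig=\chi^i(g)gx_i$; skew bracket $[u,v]=uv-p(u,v)vu$. Fix $q\in\mathbf{k}^*$, $q^3\ne1$, $q\ne-1$; assume $p_{ii}=q$ ($i<n$), $p_{nn}=q^2$, $p_{i,i-1}p_{i-1,i}=q^{-1}$ ($1<i<n$), $p_{n-1,n}p_{n,n-1}=q^{-2}$, $p_{ij}p_{ji}=1$ ($j>i+1$). $U_q^+(\mathfrak{sp}_{2n})$ is the quotient of $G\langle X\rangle$ by the ideal generated by $[x_i,[x_i,x_{i+1}]]$, $[[x_i,x_{i+1}],x_{i+1}]$ ($1\le i<n-1$), $[x_i,x_j]$ ($j>i+1$), $[[x_{n-1},x_n],x_n]$, $[x_{n-1},[x_{n-1},[x_{n-1},x_n]]]$. For $n<i<2n$, $x_i:=x_{2n-i}$; $\phi(i)=2n-i$.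 *)

From mathcomp Require Import all_boot all_order all_algebra.
Set Implicit Arguments. Unset Strict Implicit. Unset Printing Implicit Defensive.
Import GRing.Theory.
Local Open Scope ring_scope.

(* Letters x_1..x_n are encoded by natural numbers 1..n; a word is a sequence
   of letters.  A noncommutative polynomial of k<X> is represented by a finite
   formal sum of (coefficient, word) pairs; its actual value is the coefficient
   function [coef]. *)
Definition word := seq nat.

Section FreeAlg.
Variable K : fieldType.

Definition npoly := seq (K * word).

Definition coef (f : npoly) (w : word) : K :=
  \sum_(cw <- f) (if cw.2 == w then cw.1 else 0).

Definition padd (f g : npoly) : npoly := f ++ g.
Definition pscale (c : K) (f : npoly) : npoly := [seq (c * cw.1, cw.2) | cw <- f].
Definition pmul (f g : npoly) : npoly :=
  [seq (a.1 * b.1, a.2 ++ b.2) | a <- f, b <- g].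
Definition pX (i : nat) : npoly := [:: (1, [:: i])].

(* homogeneous element together with its degree (as the multiset/word of
   letters it is built from) *)
Definition hpoly := (npoly * word)%type.

(* p(u,v) = chi^u(g_v) for homogeneous u, v: bimultiplicative in the degrees *)
Definition pdeg (p : nat -> nat -> K) (u v : word) : K :=
  \prod_(a <- u) \prod_(b <- v) p a b.

Definition sbr (p : nat -> nat -> K) (u v : hpoly) : hpoly :=
  (padd (pmul u.1 v.1) (pscale (- pdeg p u.2 v.2) (pmul v.1 u.1)), u.2 ++ v.2).

Definition hx (i : nat) : hpoly := (pX i, [:: i]).

(* x_i for n < i < 2n is x_{2n-i} (phi(i) = 2n - i) *)
Definition letter (n i : nat) : nat := if (i <= n)%N then i else (2 * n - i)%N.

Definition vword (p : nat -> nat -> K) (k n : nat) : hpoly :=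
  foldl (sbr p) (hx k) [seq hx i | i <- iota k.+1 (n.-1 - k)].

(* bracketings: binary trees whose leaves are the factors *)
Inductive btree (A : Type) := BLeaf of A | BNode of btree A & btree A.
Arguments BLeaf {A}. Arguments BNode {A}.

Fixpoint bflat (A : Type) (t : btree A) : seq A :=
  match t with BLeaf a => [:: a] | BNode l r => bflat l ++ bflat r end.

Fixpoint beval (p : nat -> nat -> K) (t : btree hpoly) : hpoly :=
  match t with BLeaf a => a | BNode l r => sbr p (beval p l) (beval p r) end.

Definition leaves (p : nat -> nat -> K) (n k m : nat) : seq hpoly :=
  vword p k n :: [seq hx (letter n i) | i <- iota n (m.+1 - n)].

Definition rels (p : nat -> nat -> K) (n : nat) : seq npoly :=
  [seq (sbr p (hx i) (sbr p (hx i) (hx i.+1))).1 | i <- iota 1 (n - 2)] ++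
  [seq (sbr p (sbr p (hx i) (hx i.+1)) (hx i.+1)).1 | i <- iota 1 (n - 2)] ++
  [seq (sbr p (hx i) (hx j)).1 | i <- iota 1 n, j <- iota i.+2 (n - i.+1)] ++
  [:: (sbr p (sbr p (hx n.-1) (hx n)) (hx n)).1;
      (sbr p (hx n.-1) (sbr p (hx n.-1) (sbr p (hx n.-1) (hx n)))).1].

(* a generator term  c * a * r * b  of the two-sided ideal *)
Record igen := IGen { gc : K; ga : word; gr : npoly; gb : word }.

Definition igen_poly (t : igen) : npoly :=
  [seq (gc t * cw.1, ga t ++ cw.2 ++ gb t) | cw <- gr t].

Definition in_alph (n : nat) (w : word) : bool := all (fun a => (1 <= a <= n)%N) w.

Fixpoint InL (A : Type) (a : A) (s : seq A) : Prop :=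
  match s with [::] => False | b :: s' => b = a \/ InL a s' end.

(* f = g in U_q^+(sp_2n): f - g lies in the ideal of k<x_1..x_n> generated
   by the relations *)
Definition ucongr (p : nat -> nat -> K) (n : nat) (f g : npoly) : Prop :=
  exists s : seq igen,
    (forall t, InL t s -> [/\ gr t \in rels p n, in_alph n (ga t) & in_alph n (gb t)]) /\
    forall w, coef f w - coef g w = coef (flatten [seq igen_poly t | t <- s]) w.

End FreeAlg.
Arguments BLeaf {A}. Arguments BNode {A}.

Definition pmat (K : fieldType) (G : zmodType) (chi : nat -> G -> K) (g : nat -> G)
  (i j : nat) : K := chi i (g j).

From Pilot Require Import Defs.
From mathcomp Require Import all_boot all_order all_algebra.
From mathcomp Require Import ring zify.
From Stdlib Require Import FunctionalExtensionality.
Set Implicit Arguments. Unset Strict Implicit. Unset Printing Implicit Defensive.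
Import GRing.Theory.
Local Open Scope ring_scope.

(* Call homogeneous u, v skew-commuting when [u,v] = 0 in U.  The identity
   [[u,v],w] = [u,[v,w]] + p(v,w) [u,w] v - p(u,v) v [u,w] lets brackets be
   reassociated across skew-commuting factors, so when all non-adjacent
   factors of a sequence skew-commute every bracketing equals the left-normed
   one.  For the sequence y_k, x_n, x_{n-1}, ..., x_{2n-m} this holds: the x_i
   commute when |i - j| > 1, and y_k = v[k,n-1] skew-commutes with x_j for
   k < j < n, which follows by induction on v[k,m] from the Serre relations
   among x_k, ..., x_{n-1}. *)

(* Elements of k<X> are handled through their coefficient functions, on which
   [fmul] is the product: a sum over the factorizations w = u ++ v. *)
Section Convolution.
Variable K : fieldType.
Implicit Types (f g : Defs.npoly K) (F G H : word -> K).

Definition fadd F G : word -> K := fun w => F w + G w.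
Definition fsub F G : word -> K := fun w => F w - G w.
Definition fscale (c : K) F : word -> K := fun w => c * F w.

Fixpoint splits (w : word) : seq (word * word) :=
  if w is a :: w' then ([::], a :: w') :: [seq (a :: x.1, x.2) | x <- splits w']
  else [:: ([::], [::])].

Definition fmul F G : word -> K := fun w => \sum_(x <- splits w) F x.1 * G x.2.

Lemma fmul_nil F G : fmul F G [::] = F [::] * G [::].
Proof. by rewrite /fmul big_seq1. Qed.

Lemma fmul_cons F G a w :
  fmul F G (a :: w) = F [::] * G (a :: w) + fmul (fun x => F (a :: x)) G w.
Proof. by rewrite /fmul big_cons big_map. Qed.

Lemma fmulDl F G H : fmul (fadd F G) H = fadd (fmul F H) (fmul G H).
Proof.
apply: functional_extensionality => w; rewrite /fadd -big_split.
by apply: eq_bigr => x _; rewrite mulrDl.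
Qed.

Lemma fmulDr F G H : fmul H (fadd F G) = fadd (fmul H F) (fmul H G).
Proof.
apply: functional_extensionality => w; rewrite /fadd -big_split.
by apply: eq_bigr => x _; rewrite mulrDr.
Qed.

Lemma fmulBl F G H : fmul (fsub F G) H = fsub (fmul F H) (fmul G H).
Proof.
apply: functional_extensionality => w; rewrite /fsub -sumrB.
by apply: eq_bigr => x _; rewrite mulrBl.
Qed.

Lemma fmulBr F G H : fmul H (fsub F G) = fsub (fmul H F) (fmul H G).
Proof.
apply: functional_extensionality => w; rewrite /fsub -sumrB.
by apply: eq_bigr => x _; rewrite mulrBr.
Qed.

Lemma fmulZl c F G : fmul (fscale c F) G = fscale c (fmul F G).
Proof.
apply: functional_extensionality => w; rewrite /fscale mulr_sumr.
by apply: eq_bigr => x _; rewrite mulrA.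
Qed.

Lemma fmulZr c F G : fmul F (fscale c G) = fscale c (fmul F G).
Proof.
apply: functional_extensionality => w; rewrite /fscale mulr_sumr.
by apply: eq_bigr => x _; rewrite mulrCA.
Qed.

Lemma fmul0l F : fmul (fun _ => 0) F = fun _ => 0.
Proof. by apply: functional_extensionality => w; rewrite /fmul big1 // => x _; rewrite mul0r. Qed.

Lemma fmul0r F : fmul F (fun _ => 0) = fun _ => 0.
Proof. by apply: functional_extensionality => w; rewrite /fmul big1 // => x _; rewrite mulr0. Qed.

Lemma fmulA F G H : fmul F (fmul G H) = fmul (fmul F G) H.
Proof.
apply: functional_extensionality => w.
elim: w F => [|a w IH] F; first by rewrite !fmul_nil mulrA.
rewrite !fmul_cons fmul_nil.
have -> : (fun x => fmul F G (a :: x)) =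
          fadd (fscale (F [::]) (fun x => G (a :: x))) (fmul (fun x => F (a :: x)) G).
  by apply: functional_extensionality => x; rewrite fmul_cons.
by rewrite fmulDl fmulZl /fadd /fscale -IH; ring.
Qed.

Lemma sum_splits_indicator w u v (c : K) :
  \sum_(x <- splits w) (if (u == x.1) && (v == x.2) then c else 0) =
  if u ++ v == w then c else 0.
Proof.
elim: w u => [|a w IH] [|b u] /=; rewrite ?big_seq1 ?big_cons ?big_map //=.
  by rewrite big1 ?addr0.
rewrite add0r eqseq_cons; have [<-|nab] := eqVneq b a.
  by rewrite -IH; apply: eq_bigr => x _; rewrite eqseq_cons eqxx.
by rewrite big1 // => x _; rewrite eqseq_cons (negbTE nab).
Qed.

Lemma coef_nil : coef ([::] : Defs.npoly K) = fun _ => 0.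
Proof. by apply: functional_extensionality => w; rewrite /coef big_nil. Qed.

Lemma coef_cons (cw : K * word) f :
  coef (cw :: f) = fadd (fscale cw.1 (coef [:: (1, cw.2)])) (coef f).
Proof.
apply: functional_extensionality => w.
by rewrite /fadd /fscale /coef !big_cons big_nil addr0; case: ifP; rewrite ?mulr1 ?mulr0.
Qed.

Lemma coef_padd f g : coef (padd f g) = fadd (coef f) (coef g).
Proof. by apply: functional_extensionality => w; rewrite /coef big_cat. Qed.

Lemma coef_pscale c f : coef (pscale c f) = fscale c (coef f).
Proof.
apply: functional_extensionality => w; rewrite /coef /fscale big_map mulr_sumr.
by apply: eq_bigr => x _; case: ifP; rewrite ?mulr0.
Qed.

Lemma coef_pmul f g : coef (pmul f g) = fmul (coef f) (coef g).
Proof.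
apply: functional_extensionality => w.
rewrite /coef /fmul /pmul big_allpairs_dep /=.
transitivity (\sum_(x <- splits w) \sum_(a <- f) \sum_(b <- g)
   (if (a.2 == x.1) && (b.2 == x.2) then a.1 * b.1 else 0)); last first.
  apply: eq_bigr => x _; rewrite mulr_suml; apply: eq_bigr => a _.
  rewrite mulr_sumr; apply: eq_bigr => b _.
  by case: (a.2 == x.1); case: (b.2 == x.2); rewrite ?mulr0 ?mul0r.
rewrite [RHS]exchange_big; apply: eq_bigr => a _.
by rewrite [RHS]exchange_big; apply: eq_bigr => b _; rewrite sum_splits_indicator.
Qed.

End Convolution.

Lemma InL_cat (A : Type) (a : A) s1 s2 : InL a (s1 ++ s2) -> InL a s1 \/ InL a s2.
Proof. by elim: s1 => [|b s1 IH] /=; [right | case=> [->|/IH []]; auto]. Qed.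

Lemma InL_map (A B : Type) (h : A -> B) (b : B) s :
  InL b (map h s) -> exists2 a, InL a s & b = h a.
Proof.
elim: s => [|a s IH] //= [<-|/IH [a' ? ->]]; first by exists a; auto.
by exists a'; auto.
Qed.

Section Ideal.
Variables (K : fieldType) (p : nat -> nat -> K) (n : nat).
Implicit Types (f : Defs.npoly K) (F G : word -> K) (s : seq (igen K)).

Definition admissible s := forall t, InL t s ->
  [/\ gr t \in rels p n, in_alph n (ga t) & in_alph n (gb t)].
Definition ideal_elt s := flatten [seq igen_poly t | t <- s].
Definition in_ideal F := exists s, admissible s /\ forall w, F w = coef (ideal_elt s) w.
Definition alph_poly f := all (fun cw => in_alph n cw.2) f.

Lemma ucongrE f g : ucongr p n f g = in_ideal (fsub (coef f) (coef g)).
Proof. by []. Qed.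

Lemma ideal0 : in_ideal (fun _ => 0).
Proof. by exists [::]; split=> // w; rewrite /coef big_nil. Qed.

Lemma idealD F G : in_ideal F -> in_ideal G -> in_ideal (fadd F G).
Proof.
move=> [s1 [adm1 e1]] [s2 [adm2 e2]]; exists (s1 ++ s2); split.
  by move=> t /(@InL_cat _ _ s1 s2) [/adm1|/adm2].
by move=> w; rewrite /ideal_elt map_cat flatten_cat /coef big_cat /fadd e1 e2.
Qed.

Lemma ideal_rel r : r \in rels p n -> in_ideal (coef r).
Proof.
move=> hr; exists [:: IGen 1 [::] r [::]]; split; first by move=> t /= [<-|].
move=> w; rewrite /ideal_elt /= cats0 /igen_poly /=; congr coef.
by rewrite -[LHS]map_id; apply: eq_map => -[c x] /=; rewrite mul1r cats0.
Qed.

Lemma in_ideal_map (h : igen K -> igen K) (phi : K * word -> K * word)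
    (Phi : (word -> K) -> word -> K) F :
  (forall t, [/\ gr (h t) = gr t, in_alph n (ga t) -> in_alph n (ga (h t))
               & in_alph n (gb t) -> in_alph n (gb (h t))]) ->
  (forall t, igen_poly (h t) = map phi (igen_poly t)) ->
  (forall f, coef (map phi f) = Phi (coef f)) ->
  in_ideal F -> in_ideal (Phi F).
Proof.
move=> hh hphi hPhi [s [adm eF]]; exists (map h s); split.
  move=> _ /(@InL_map _ _ h _ s) [t /adm [r a b] ->].
  by have [-> ha hb] := hh t; split; [| apply: ha | apply: hb].
have -> : F = coef (ideal_elt s) by apply: functional_extensionality.
move=> w; rewrite -hPhi /ideal_elt map_flatten -!map_comp.
by congr (coef (flatten _) w); apply: eq_map => t /=; rewrite hphi.
Qed.

Lemma idealZ c F : in_ideal F -> in_ideal (fscale c F).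
Proof.
apply: (in_ideal_map (h := fun t => IGen (c * gc t) (ga t) (gr t) (gb t))
                     (phi := fun cw => (c * cw.1, cw.2))) => // [t|f].
  by rewrite /igen_poly -map_comp; apply: eq_map => cw /=; rewrite mulrA.
exact: coef_pscale.
Qed.

Lemma idealB F G : in_ideal F -> in_ideal G -> in_ideal (fsub F G).
Proof.
move=> hF /(idealZ (-1)) /(idealD hF); congr in_ideal.
by apply: functional_extensionality => w; rewrite /fadd /fscale mulN1r.
Qed.

Lemma ideal_monoMl u F : in_alph n u -> in_ideal F -> in_ideal (fmul (coef [:: (1, u)]) F).
Proof.
move=> hu; apply: (in_ideal_map (h := fun t => IGen (gc t) (u ++ ga t) (gr t) (gb t))
                                (phi := fun cw => (1 * cw.1, u ++ cw.2))) => [t|t|f].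
- by split=> //=; move: hu; rewrite /in_alph all_cat => -> ->.
- by rewrite /igen_poly -map_comp; apply: eq_map => cw /=; rewrite mul1r -catA.
- by rewrite -coef_pmul /pmul allpairs1l.
Qed.

Lemma ideal_monoMr u F : in_alph n u -> in_ideal F -> in_ideal (fmul F (coef [:: (1, u)])).
Proof.
move=> hu; apply: (in_ideal_map (h := fun t => IGen (gc t) (ga t) (gr t) (gb t ++ u))
                                (phi := fun cw => (cw.1 * 1, cw.2 ++ u))
                                (Phi := fun G => fmul G (coef [:: (1, u)])) (F := F)) => [t|t|f].
- by split=> //=; move: hu; rewrite /in_alph all_cat => -> ->.
- by rewrite /igen_poly -map_comp; apply: eq_map => cw /=; rewrite mulr1 -!catA.
- by rewrite -coef_pmul /pmul allpairs1r.
Qed.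

Lemma idealMl f F : alph_poly f -> in_ideal F -> in_ideal (fmul (coef f) F).
Proof.
move=> + hF; elim: f => [|cw f IH] /=; first by rewrite coef_nil fmul0l => _; apply: ideal0.
case/andP=> hcw /IH hf; rewrite coef_cons fmulDl fmulZl.
by apply: idealD => //; apply/idealZ/ideal_monoMl.
Qed.

Lemma idealMr f F : alph_poly f -> in_ideal F -> in_ideal (fmul F (coef f)).
Proof.
move=> + hF; elim: f => [|cw f IH] /=; first by rewrite coef_nil fmul0r => _; apply: ideal0.
case/andP=> hcw /IH hf; rewrite coef_cons fmulDr fmulZr.
by apply: idealD => //; apply/idealZ/ideal_monoMr.
Qed.

End Ideal.

Section SkewBracket.
Variables (K : fieldType) (p : nat -> nat -> K) (n : nat).
Implicit Types (u v w a b c : hpoly K) (f g h : Defs.npoly K).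
Local Notation sb := (sbr p).
Local Notation in_ideal := (in_ideal p n).
Local Notation ucongr := (ucongr p n).

Definition alph_hpoly u := alph_poly n u.1.
Definition skew_commute u v := in_ideal (coef (sb u v).1).

Lemma sbr_deg u v : (sb u v).2 = u.2 ++ v.2.
Proof. by []. Qed.

Lemma coef_sbr u v : coef (sb u v).1 =
  fadd (fmul (coef u.1) (coef v.1)) (fscale (- pdeg p u.2 v.2) (fmul (coef v.1) (coef u.1))).
Proof. by rewrite /sbr /= coef_padd coef_pscale !coef_pmul. Qed.

Lemma pdegDl (x y z : word) : pdeg p (x ++ y) z = pdeg p x z * pdeg p y z.
Proof. by rewrite /pdeg big_cat. Qed.

Lemma pdegDr (x y z : word) : pdeg p x (y ++ z) = pdeg p x y * pdeg p x z.
Proof. by rewrite /pdeg -big_split; apply: eq_bigr => i _; rewrite big_cat. Qed.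

Lemma alph_sbr u v : alph_hpoly u -> alph_hpoly v -> alph_hpoly (sb u v).
Proof.
have alph_pmul f g : alph_poly n f -> alph_poly n g -> alph_poly n (pmul f g).
  move=> /allP hf /allP hg; apply/allP => _ /allpairsP [[x y] [/hf hx /hg hy ->]].
  by move: hx hy; rewrite /in_alph all_cat => -> ->.
move=> hu hv; rewrite /alph_hpoly /alph_poly /= all_cat all_map.
by apply/andP; split; apply: alph_pmul.
Qed.

Ltac expand_coef := rewrite ?coef_sbr ?sbr_deg ?pdegDl ?pdegDr;
  do 4 rewrite ?(fmulDl, fmulDr, fmulBl, fmulBr, fmulZl, fmulZr); rewrite ?fmulA;
  apply: functional_extensionality => ?; rewrite /fadd /fsub /fscale /=.

Lemma ucongr_refl f : ucongr f f.
Proof.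
rewrite ucongrE (_ : fsub _ _ = fun _ => 0); first exact: ideal0.
by apply: functional_extensionality => w; rewrite /fsub subrr.
Qed.

Lemma ucongr_sym f g : ucongr f g -> ucongr g f.
Proof.
rewrite !ucongrE => /(idealZ (-1)); congr in_ideal.
by apply: functional_extensionality => w; rewrite /fscale /fsub mulN1r opprB.
Qed.

Lemma ucongr_trans f g h : ucongr f g -> ucongr g h -> ucongr f h.
Proof.
rewrite !ucongrE => hfg /(idealD hfg); congr in_ideal.
by apply: functional_extensionality => w; rewrite /fadd /fsub addrA subrK.
Qed.

Lemma ideal_sbr_r u v : alph_hpoly u -> in_ideal (coef v.1) -> in_ideal (coef (sb u v).1).
Proof.
move=> hu hv; rewrite coef_sbr; apply: idealD; first exact: idealMl.
by apply: idealZ; apply: idealMr.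
Qed.

Lemma ucongr_sbrA u v w : alph_hpoly v -> skew_commute u w ->
  ucongr (sb (sb u v) w).1 (sb u (sb v w)).1.
Proof.
move=> hv huw; rewrite ucongrE.
have -> : fsub (coef (sb (sb u v) w).1) (coef (sb u (sb v w)).1) =
  fadd (fscale (pdeg p v.2 w.2) (fmul (coef (sb u w).1) (coef v.1)))
       (fscale (- pdeg p u.2 v.2) (fmul (coef v.1) (coef (sb u w).1))).
  by expand_coef; ring.
by apply: idealD; apply: idealZ; [apply: idealMr | apply: idealMl].
Qed.

Lemma in_ideal_ucongr f g : ucongr f g -> in_ideal (coef g) -> in_ideal (coef f).
Proof.
rewrite ucongrE => hfg /(idealD hfg); congr in_ideal.
by apply: functional_extensionality => w; rewrite /fadd /fsub subrK.
Qed.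

Lemma ucongr_sbr u u' v v' :
  alph_hpoly u -> alph_hpoly u' -> alph_hpoly v -> alph_hpoly v' ->
  u.2 = u'.2 -> v.2 = v'.2 -> ucongr u.1 u'.1 -> ucongr v.1 v'.1 ->
  ucongr (sb u v).1 (sb u' v').1.
Proof.
rewrite !ucongrE => hu hu' hv hv' du dv Du Dv.
set Fu := fsub _ _ in Du; set Fv := fsub _ _ in Dv.
have -> : fsub (coef (sb u v).1) (coef (sb u' v').1) =
  fsub (fadd (fmul Fu (coef v.1)) (fmul (coef u'.1) Fv))
       (fscale (pdeg p u.2 v.2) (fadd (fmul Fv (coef u.1)) (fmul (coef v'.1) Fu))).
  by rewrite /Fu /Fv; expand_coef; rewrite -du -dv; ring.
apply: idealB; last apply: idealZ; apply: idealD.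
- exact: idealMr.
- exact: idealMl.
- exact: idealMr.
- exact: idealMl.
Qed.

Lemma skew_commute_sbrl a b c : alph_hpoly a -> alph_hpoly b ->
  skew_commute a c -> skew_commute b c -> skew_commute (sb a b) c.
Proof.
move=> ha hb hac hbc; apply: (in_ideal_ucongr (ucongr_sbrA hb hac)).
exact: ideal_sbr_r.
Qed.

Lemma skew_commute_sbr_last a b c : alph_hpoly a -> alph_hpoly b -> alph_hpoly c ->
  skew_commute a c -> skew_commute (sb b c) c -> skew_commute (sb (sb a b) c) c.
Proof.
move=> ha hb hc hac hbcc; have hbc := alph_sbr hb hc.
apply: (in_ideal_ucongr (g := (sb (sb a (sb b c)) c).1)).
  apply: ucongr_sbr => //; rewrite ?alph_sbr //; first by rewrite /= catA.
  - exact: ucongr_sbrA.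
  - exact: ucongr_refl.
exact: skew_commute_sbrl.
Qed.

(* Expanding both sides in the free algebra, [[[a,b],c],b] is the following
   combination of [a,c], [[a,b],b] and [b,[b,c]]; dividing by 1 + q is where
   q <> -1 is used. *)
Lemma skew_commute_sbr_middle (q : K) a b c : q != 0 -> 1 + q != 0 ->
  pdeg p b.2 c.2 * pdeg p c.2 b.2 = q^-1 -> pdeg p b.2 b.2 = q ->
  alph_hpoly a -> alph_hpoly b -> alph_hpoly c ->
  skew_commute a c -> skew_commute (sb a b) b -> skew_commute b (sb b c) ->
  skew_commute (sb (sb a b) c) b.
Proof.
move=> q0 q1 hbc hbb ha hb hc zac zabb zbbc.
have /andP [t0 _] : (pdeg p b.2 c.2 != 0) && (pdeg p c.2 b.2 != 0).
  by rewrite -negb_or -mulf_eq0 hbc invr_eq0.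
have ecb : pdeg p c.2 b.2 = q^-1 / pdeg p b.2 c.2 by rewrite -hbc; field.
set s := pdeg p a.2 b.2; set t := pdeg p b.2 c.2 in t0 ecb; set r := pdeg p a.2 c.2.
rewrite /skew_commute.
have -> : coef (sb (sb (sb a b) c) b).1 =
  fadd (fscale (q * t / (1 + q)) (fmul (fmul (coef (sb a c).1) (coef b.1)) (coef b.1)))
  (fadd (fscale (- s) (fmul (fmul (coef b.1) (coef (sb a c).1)) (coef b.1)))
  (fadd (fscale (s * s / (t * (1 + q))) (fmul (coef b.1) (fmul (coef b.1) (coef (sb a c).1))))
  (fadd (fscale (1 / (t * (1 + q))) (fmul (coef (sb (sb a b) b).1) (coef c.1)))
  (fadd (fscale (- t * r / (1 + q)) (fmul (coef c.1) (coef (sb (sb a b) b).1)))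
  (fadd (fscale (s * s * r / (t * (1 + q))) (fmul (coef (sb b (sb b c)).1) (coef a.1)))
        (fscale (- 1 / (t * (1 + q))) (fmul (coef a.1) (coef (sb b (sb b c)).1)))))))).
  expand_coef; rewrite ecb hbb /s /t /r; field.
  by rewrite q1 t0 q0.
apply: idealD; first by apply/idealZ/idealMr => //; apply: idealMr.
apply: idealD; first by apply/idealZ/idealMr => //; apply: idealMl.
apply: idealD; first by apply/idealZ/idealMl => //; apply: idealMl.
apply: idealD; first exact/idealZ/idealMr.
apply: idealD; first exact/idealZ/idealMl.
by apply: idealD; apply: idealZ; [apply: idealMr | apply: idealMl].
Qed.

End SkewBracket.

Section Bracketings.
Variables (K : fieldType) (p : nat -> nat -> K) (n : nat).
Local Notation sb := (sbr p).
Local Notation alph := (alph_hpoly n).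
Local Notation skew_commute := (skew_commute p n).
Local Notation ucongr := (ucongr p n).
Implicit Types (a b c x : hpoly K) (s t : seq (hpoly K)) (tr : btree (hpoly K)).

Definition lbr a s := foldl sb a s.
Definition hpoly0 : hpoly K := ([::], [::]).
Definition far_skew_commuting s := forall i j, (i.+1 < j < size s)%N ->
  skew_commute (nth hpoly0 s i) (nth hpoly0 s j).

Lemma lbr_deg a s : (lbr a s).2 = a.2 ++ flatten (map snd s).
Proof. by elim: s a => [|b s IH] a /=; rewrite ?cats0 // /lbr /= IH catA. Qed.

Lemma alph_lbr a s : alph a -> all alph s -> alph (lbr a s).
Proof. by elim: s a => [|b s IH] a //= ha /andP [hb hs]; apply: IH => //; apply: alph_sbr. Qed.

Lemma beval_deg tr : (beval p tr).2 = flatten (map snd (bflat tr)).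
Proof. by elim: tr => [a|l IHl r IHr] /=; rewrite ?cats0 // map_cat flatten_cat IHl IHr. Qed.

Lemma alph_beval tr : all alph (bflat tr) -> alph (beval p tr).
Proof.
elim: tr => [a|l IHl r IHr] /=; first by rewrite andbT.
by rewrite all_cat => /andP [/IHl hl /IHr hr]; apply: alph_sbr.
Qed.

Lemma bflat_cons tr : exists a s, bflat tr = a :: s.
Proof.
elim: tr => [a|l [a [s el]] r _]; first by exists a, [::].
by exists a, (s ++ bflat r); rewrite /= el.
Qed.

Lemma far_skew_commuting_catl s t : far_skew_commuting (s ++ t) -> far_skew_commuting s.
Proof.
move=> h i j hij; have := h i j; rewrite size_cat !nth_cat !ifT; try lia.
by apply; lia.
Qed.

Lemma far_skew_commuting_catr s t : far_skew_commuting (s ++ t) -> far_skew_commuting t.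
Proof.
move=> h i j hij; have := h (size s + i)%N (size s + j)%N.
by rewrite size_cat !nth_cat !ltnNge !leq_addr !addKn; apply; lia.
Qed.

Lemma far_skew_commuting_split s b t : far_skew_commuting (s ++ b :: t) ->
  {in s & t, forall x c, skew_commute x c}.
Proof.
move=> h x c /(nthP hpoly0) [i hi <-] /(nthP hpoly0) [j hj <-].
have {}hi : (i < size s)%N := hi; have {}hj : (j < size t)%N := hj.
have ej : nth hpoly0 (s ++ b :: t) (size s + j.+1) = nth hpoly0 t j.
  by rewrite nth_cat ltnNge leq_addr addKn.
have := h i (size s + j.+1)%N; rewrite ej nth_cat hi size_cat /=; apply; lia.
Qed.

Lemma skew_commute_lbr a s c : alph a -> all alph s ->
  skew_commute a c -> {in s, forall b, skew_commute b c} -> skew_commute (lbr a s) c.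
Proof.
elim: s a => [|b s IH] a //= ha /andP [hb hs] hac hsc.
apply: IH => //.
- exact: alph_sbr.
- by apply: skew_commute_sbrl => //; apply: hsc; rewrite inE eqxx.
- by move=> b' hb'; apply: hsc; rewrite inE hb' orbT.
Qed.

Lemma ucongr_sbr_lbr x b t : alph x -> alph b -> all alph t ->
  {in t, forall c, skew_commute x c} -> ucongr (sb x (lbr b t)).1 (lbr (sb x b) t).1.
Proof.
elim/last_ind: t => [|t c IH] hx hb; first by move=> *; apply: ucongr_refl.
rewrite all_rcons => /andP [hc ht] hxt.
have hxc : skew_commute x c by apply: hxt; rewrite mem_rcons inE eqxx.
have hy := alph_lbr hb ht; rewrite /lbr !foldl_rcons -!/(lbr _ _).
apply: ucongr_trans (ucongr_sym (ucongr_sbrA hy hxc)) _.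
apply: ucongr_sbr => //.
- exact: alph_sbr.
- by apply: alph_lbr => //; apply: alph_sbr.
- by rewrite /= !lbr_deg catA.
- by apply: IH => // c' hc'; apply: hxt; rewrite mem_rcons inE hc' orbT.
- exact: ucongr_refl.
Qed.

Lemma beval_ucongr_lbr tr a s : bflat tr = a :: s ->
  far_skew_commuting (a :: s) -> all alph (a :: s) -> ucongr (beval p tr).1 (lbr a s).1.
Proof.
elim: tr a s => [b|l IHl r IHr] a s; first by case=> <- <- *; apply: ucongr_refl.
have [a1 [s1 el]] := bflat_cons l; have [a2 [s2 er]] := bflat_cons r.
rewrite [bflat _]/= el er => -[<- <-]; rewrite -cat_cons all_cat => hfar /andP [hl hr].
move: (hl) (hr); rewrite /= => /andP [ha1 hs1] /andP [ha2 hs2].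
have -> : lbr a1 (s1 ++ a2 :: s2) = lbr (sb (lbr a1 s1) a2) s2 by rewrite /lbr foldl_cat.
apply: ucongr_trans (ucongr_sbr_lbr (alph_lbr ha1 hs1) ha2 hs2 _).
  apply: ucongr_sbr.
  - by apply: alph_beval; rewrite el.
  - exact: alph_lbr.
  - by apply: alph_beval; rewrite er.
  - exact: alph_lbr.
  - by rewrite beval_deg lbr_deg el.
  - by rewrite beval_deg lbr_deg er.
  - by apply: IHl (far_skew_commuting_catl hfar) hl.
  - by apply: IHr (far_skew_commuting_catr hfar) hr.
move=> c hc; apply: skew_commute_lbr => // [|b hb];
  apply: (far_skew_commuting_split hfar); by rewrite ?inE ?eqxx ?hb ?orbT.
Qed.

Lemma ucongr_beval tr1 tr2 s : bflat tr1 = s -> bflat tr2 = s ->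
  far_skew_commuting s -> all alph s -> ucongr (beval p tr1).1 (beval p tr2).1.
Proof.
move=> h1 h2; have [a [s' e1]] := bflat_cons tr1; rewrite -h1 e1 in h2 * => hfar hs.
exact: ucongr_trans (beval_ucongr_lbr e1 hfar hs) (ucongr_sym (beval_ucongr_lbr h2 hfar hs)).
Qed.

End Bracketings.

Section VBrackets.
Variables (K : fieldType) (p : nat -> nat -> K) (n : nat).
Local Notation sb := (sbr p).
Local Notation alph := (alph_hpoly n).
Local Notation skew_commute := (skew_commute p n).
Local Notation hx := (@hx K).

Definition vbr k m := lbr p (hx k) [seq hx i | i <- iota k.+1 (m - k)].

Lemma vbr_kk k : vbr k k = hx k.
Proof. by rewrite /vbr subnn. Qed.

Lemma vbrS k m : (k <= m)%N -> vbr k m.+1 = sb (vbr k m) (hx m.+1).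
Proof.
move=> hkm; rewrite /vbr /lbr subSn // -[(m - k).+1]addn1 iotaD map_cat foldl_cat /=.
by congr (sb _ (hx _)); lia.
Qed.

Lemma alph_hx i : (1 <= i <= n)%N -> alph (hx i).
Proof. by move=> hi; rewrite /alph_hpoly /alph_poly /= /in_alph /= hi. Qed.

Lemma alph_vbr k m : (1 <= k <= m)%N -> (m <= n)%N -> alph (vbr k m).
Proof.
move=> hkm hmn; apply: alph_lbr; first by apply: alph_hx; lia.
by rewrite all_map; apply/allP => i; rewrite mem_iota => hi; apply: alph_hx; lia.
Qed.

Lemma pdeg_hx i j : pdeg p (hx i).2 (hx j).2 = p i j.
Proof. by rewrite /pdeg !big_seq1. Qed.

Lemma skew_commute_far i j : (1 <= i)%N -> (i.+1 < j <= n)%N -> skew_commute (hx i) (hx j).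
Proof.
move=> hi hj; apply: ideal_rel; rewrite /rels !mem_cat; apply/or4P; apply: Or43.
by apply/allpairsPdep; exists i, j; rewrite !mem_iota; split=> //; lia.
Qed.

Lemma skew_commute_serre_l i : (1 <= i)%N -> (i.+1 < n)%N ->
  skew_commute (hx i) (sb (hx i) (hx i.+1)).
Proof.
move=> hi hin; apply: ideal_rel; rewrite /rels mem_cat; apply/orP; left.
by apply: (map_f (fun i => (sb (hx i) (sb (hx i) (hx i.+1))).1)); rewrite mem_iota; lia.
Qed.

Lemma skew_commute_serre_r i : (1 <= i)%N -> (i.+1 < n)%N ->
  skew_commute (sb (hx i) (hx i.+1)) (hx i.+1).
Proof.
move=> hi hin; apply: ideal_rel; rewrite /rels !mem_cat; apply/orP; right; apply/orP; left.
by apply: (map_f (fun i => (sb (sb (hx i) (hx i.+1)) (hx i.+1)).1)); rewrite mem_iota; lia.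
Qed.

Lemma skew_commute_vbr_far k m j : (1 <= k <= m)%N -> (m.+1 < j <= n)%N ->
  skew_commute (vbr k m) (hx j).
Proof.
move=> hkm hj; apply: skew_commute_lbr.
- by apply: alph_hx; lia.
- by rewrite all_map; apply/allP => i; rewrite mem_iota => hi; apply: alph_hx; lia.
- by apply: skew_commute_far; lia.
- by move=> b /mapP [i]; rewrite mem_iota => hi ->; apply: skew_commute_far; lia.
Qed.

Lemma skew_commute_vbr_last k m : (1 <= k <= m)%N -> (m.+1 < n)%N ->
  skew_commute (vbr k m.+1) (hx m.+1).
Proof.
move=> hkm hmn; rewrite vbrS; last lia.
have [ekm|hkm'] := eqVneq k m.
  by rewrite ekm vbr_kk; apply: skew_commute_serre_r; lia.
have [m' em] : exists m', m = m'.+1 by exists m.-1; lia.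
rewrite em vbrS; last lia.
apply: skew_commute_sbr_last.
- by apply: alph_vbr; lia.
- by apply: alph_hx; lia.
- by apply: alph_hx; lia.
- by apply: skew_commute_vbr_far; lia.
- by apply: skew_commute_serre_r; lia.
Qed.

Lemma vword_vbr k : vword p k n = vbr k n.-1.
Proof. by []. Qed.

Lemma alph_leaves k m : (1 <= k)%N -> (n <= m < 2 * n - k)%N -> all alph (leaves p n k m).
Proof.
move=> hk hm; rewrite /leaves /= vword_vbr alph_vbr /=; try lia.
rewrite all_map; apply/allP => i; rewrite mem_iota => hi.
by apply: alph_hx; rewrite /letter; case: ifP; lia.
Qed.

End VBrackets.

Section Sp2n.
Variables (K : fieldType) (p : nat -> nat -> K) (n : nat) (q : K).
Hypothesis hq0 : q != 0.
Hypothesis hq1 : 1 + q != 0.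
Hypothesis hpii : forall i, (1 <= i < n)%N -> p i i = q.
Hypothesis hpadj : forall i, (1 < i < n)%N -> p i i.-1 * p i.-1 i = q^-1.
Hypothesis hpfar : forall i j, (1 <= i)%N -> (i.+1 < j <= n)%N -> p i j * p j i = 1.
Local Notation sb := (sbr p).
Local Notation alph := (alph_hpoly n).
Local Notation skew_commute := (skew_commute p n).
Local Notation hx := (@hx K).
Local Notation vbr := (vbr p).

Lemma skew_commute_far_rev i j : (1 <= i)%N -> (i.+1 < j <= n)%N -> skew_commute (hx j) (hx i).
Proof.
move=> hi hj; have := idealZ (- p j i) (skew_commute_far p hi hj); congr in_ideal.
have := hpfar hi hj; rewrite !coef_sbr !pdeg_hx => hij.
have pij0 : p i j != 0.
  by apply/eqP => h0; move: hij; rewrite h0 mul0r => /eqP; rewrite eq_sym oner_eq0.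
have ej : p j i = (p i j)^-1 by apply: (mulfI pij0); rewrite hij mulfV.
by apply: functional_extensionality => w; rewrite /fadd /fscale ej; field.
Qed.

Lemma skew_commute_vbr_middle k m : (1 <= k <= m)%N -> (m.+2 < n)%N ->
  skew_commute (vbr k m.+2) (hx m.+1).
Proof.
move=> hkm hmn; rewrite !vbrS; try lia.
apply: (skew_commute_sbr_middle (q := q)) => //.
- by rewrite !pdeg_hx mulrC (hpadj (i := m.+2)) //; lia.
- by rewrite pdeg_hx hpii //; lia.
- by apply: alph_vbr; lia.
- by apply: alph_hx; lia.
- by apply: alph_hx; lia.
- by apply: skew_commute_vbr_far; lia.
- by rewrite -vbrS; [apply: skew_commute_vbr_last | ]; lia.
- by apply: skew_commute_serre_l; lia.
Qed.

Lemma skew_commute_vbr k m j : (1 <= k)%N -> (k < j <= m)%N -> (m < n)%N ->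
  skew_commute (vbr k m) (hx j).
Proof.
move=> hk; elim: m j => [|m IH] j hj hmn; first lia.
have [hjm|hjm|ejm] := ltngtP j m.
- rewrite vbrS; last lia.
  apply: skew_commute_sbrl.
  + by apply: alph_vbr; lia.
  + by apply: alph_hx; lia.
  + by apply: IH; lia.
  + by apply: skew_commute_far_rev; lia.
- have -> : j = m.+1 by lia.
  by apply: skew_commute_vbr_last; lia.
- have [m' em] : exists m', m = m'.+1 by exists m.-1; lia.
  by rewrite ejm em; apply: skew_commute_vbr_middle; lia.
Qed.

Lemma far_skew_commuting_leaves k m : (1 <= k)%N -> (n <= m < 2 * n - k)%N ->
  far_skew_commuting p n (leaves p n k m).
Proof.
move=> hk hm.
have nthS t : (t < m.+1 - n)%N -> nth (hpoly0 K) (leaves p n k m) t.+1 = hx (n - t).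
  move=> ht; rewrite /leaves /= (nth_map 0%N) ?size_iota // nth_iota //.
  by congr hx; rewrite /letter; case: ifP; lia.
move=> i [|t]; rewrite /leaves [size _]/= size_map size_iota -/(leaves p n k m) => hij.
  lia.
rewrite nthS; last lia.
case: i hij => [|i] hij.
  by rewrite /= vword_vbr; apply: skew_commute_vbr; lia.
by rewrite nthS; [apply: skew_commute_far_rev | ]; lia.
Qed.

End Sp2n.

Theorem lemma3p4 (K : fieldType) (G : zmodType) (n : nat) (g : nat -> G)
  (chi : nat -> G -> K) (q : K)
  (hn : (2 <= n)%N)
  (hchiM : forall i, (1 <= i <= n)%N -> forall a b : G, chi i (a + b) = chi i a * chi i b)
  (hchi0 : forall i, (1 <= i <= n)%N -> forall a : G, chi i a != 0)
  (hq0 : q != 0) (hq3 : q ^+ 3 != 1) (hq1 : q != -1)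
  (hpii : forall i, (1 <= i < n)%N -> pmat chi g i i = q)
  (hpnn : pmat chi g n n = q ^+ 2)
  (hpadj : forall i, (1 < i < n)%N -> pmat chi g i i.-1 * pmat chi g i.-1 i = q^-1)
  (hplast : pmat chi g n.-1 n * pmat chi g n n.-1 = q ^- 2)
  (hpfar : forall i j, (1 <= i)%N -> (i.+1 < j <= n)%N -> pmat chi g i j * pmat chi g j i = 1)
  (k m : nat) (hk : (1 <= k <= n)%N) (hnm : (n <= m)%N) (hm : (m < 2 * n - k)%N)
  (t1 t2 : btree (hpoly K))
  (h1 : bflat t1 = leaves (pmat chi g) n k m)
  (h2 : bflat t2 = leaves (pmat chi g) n k m) :
  ucongr (pmat chi g) n (beval (pmat chi g) t1).1 (beval (pmat chi g) t2).1.
Proof.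
(* Only the relations among x_1, ..., x_{n-1} and the far commutations are
   needed, so hpnn, hplast and hq3 are unused; the characters enter only
   through the braiding pmat chi g, so hchiM and hchi0 are unused as well. *)
have hq1' : 1 + q != 0 by rewrite addrC addr_eq0.
have hk1 : (1 <= k)%N by case/andP: hk.
have hm' : (n <= m < 2 * n - k)%N by rewrite hnm hm.
apply: (ucongr_beval h1 h2).
- exact: (far_skew_commuting_leaves hq0 hq1' hpii hpadj hpfar hk1 hm').
- exact: alph_leaves hk1 hm'.
Qed.
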